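(* Let $T\in C^{\mathrm{Lip}}_{d-1}(\mathbb{R}^N;\mathbb{Z})$ and let $U\in C^{\mathrm{Lip}}_{d}(\mathbb{R}^N;\mathbb{Z})$ satisfy $\partial U=2T$. Then the reduction $U\bmod 2\in C^{\mathrm{Lip}}_{d}(\mathbb{R}^N;\mathbb{Z}/2)$ is a mod-2 cycle, and \[\mathrm{FV}(T)\le\frac{\mathrm{mass}\,U+\mathrm{NOA}(U\bmod 2)}{2}.\]
   Context: For $\mathbb{K}\in\{\mathbb{Z},\mathbb{Z}/2\}$ (norm: usual absolute value on $\mathbb{Z}$; $|0|=0,|1|=1$ on $\mathbb{Z}/2$), a Lipschitz $d$-chain $A\in C^{\mathrm{Lip}}_d(\mathbb{R}^N;\mathbb{K})$ is a finite formal sum $\sum_i a_i\alpha_i$, $a_i\in\mathbb{K}$, $\alpha_i$ Lipschitz maps from the standard $d$-simplex $\Delta$ into $\mathbb{R}^N$, with the singular boundary operator; $\mathrm{mass}\,A=\sum_i|a_i|\int_\Delta|J_{\alpha_i}|$. $\mathrm{FV}(T)=\inf\{\mathrm{mass}\,V: V\in C^{\mathrm{Lip}}_{d}(\mathbb{R}^N;\mathbb{Z}),\ \partial V=T\}$. For a mod-2 Lipschitz $d$-cycle $A\in C^{\mathrm{Lip}}_d(\mathbb{R}^N;\mathbb{Z}/2)$, a pseudo-orientation of $A$ is an $R\in C^{\mathrm{Lip}}_d(\mathbb{R}^N;\mathbb{Z})$ with $\partial R=0$ and $R\equiv A \pmod 2$; the nonorientability area is $\mathrm{NOA}(A)=\inf\{\mathrm{mass}\,R: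 R \text{ a pseudo-orientation of } A\}$. *)

From HB Require Import structures.
From mathcomp Require Import all_boot all_order all_algebra.
From mathcomp Require Import all_classical all_reals all_analysis.
Set Implicit Arguments. Unset Strict Implicit. Unset Printing Implicit Defensive.
Import Order.TTheory GRing.Theory Num.Theory.
Import numFieldNormedType.Exports.
Local Open Scope classical_set_scope.
Local Open Scope ring_scope.

Section LipChains.
Variables (R : realType) (N : nat).

(** The standard m-simplex, realized in R^m with vertices 0, e_1, ..., e_m. *)
Definition simplex (m : nat) : set 'rV[R]_m :=
  [set x | (forall i, 0 <= x ord0 i) /\ \sum_i x ord0 i <= 1].
Arguments simplex m : clear implicits.

Definition open_simplex (m : nat) : set 'rV[R]_m :=
  [set x | (forall i, 0 < x ord0 i) /\ \sum_i x ord0 i < 1].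
Arguments open_simplex m : clear implicits.

(** Vertex j (j = 0..m) of the standard m-simplex: v_0 = 0, v_j = e_j. *)
Definition vertex (m : nat) (j : 'I_m.+1) : 'rV[R]_m :=
  \row_(l < m) (if (l.+1 == j)%N then 1 else 0).

Definition bary (m : nat) (y : 'rV[R]_m) (k : 'I_m.+1) : R :=
  if (val k == 0)%N then 1 - \sum_j y ord0 j
  else \sum_(j < m | (j.+1 == k)%N) y ord0 j.

(** i-th face map Delta_m -> Delta_{m+1}: the affine map sending the vertices
    of Delta_m, in order, to the vertices of Delta_{m+1} other than the i-th. *)
Definition facemap (m : nat) (i : 'I_m.+2) (y : 'rV[R]_m) : 'rV[R]_m.+1 :=
  \sum_(k < m.+1) bary y k *: vertex (lift i k).

(** A singular m-simplex in R^N is a map Delta_m -> R^N; we represent it by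
    a total function normalized to be 0 outside Delta_m, so that equality of
    singular simplices is equality of these functions. *)
Definition smap (m : nat) := 'rV[R]_m -> 'rV[R]_N.

Definition canonical_smap m (s : smap m) : Prop :=
  forall x, ~ simplex m x -> s x = 0.

Definition lipschitz_simplex m (s : smap m) : Prop :=
  canonical_smap s /\
  exists k : R, forall x y, simplex m x -> simplex m y ->
    `|s x - s y| <= k * `|x - y|.

Definition face m (s : smap m.+1) (i : 'I_m.+2) : smap m :=
  fun y => if `[< simplex m y >] then s (facemap i y) else 0.

(** A chain with coefficients in K = finitely supported function on
    singular simplices; a Lipschitz chain is supported on Lipschitz simplices. *)
Definition supp (K : nmodType) m (c : smap m -> K) : set (smap m) :=
  [set s | c s != 0].

Definition lipchain (K : nmodType) m (c : smap m -> K) : Prop :=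
  finite_set (supp c) /\ forall s, c s != 0 -> lipschitz_simplex s.

Definition bd (K : pzRingType) m (c : smap m.+1 -> K) : smap m -> K :=
  fun t => \sum_(s \in supp c)
             \sum_(i < m.+2) (((-1) ^+ i * c s) *+ (face s i == t)).

Definition mod2 m (c : smap m -> int) : smap m -> 'Z_2 :=
  fun s => (c s)%:~R.

(** Jacobian |J_s|(x) = sqrt det (Ds(x) Ds(x)^T) (rows = partial derivatives),
    at points of the open simplex where s is differentiable, 0 elsewhere
    (a null set, by Rademacher's theorem, for Lipschitz s). *)
Definition jac m (s : smap m) (x : 'rV[R]_m) : R :=
  let M := \matrix_(j < m) ('d s x (delta_mx ord0 j)) in
  Num.sqrt (\det (M *m M^T)).

Definition jac_integrand m (s : smap m) (x : 'rV[R]_m) : \bar R :=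
  if `[< open_simplex m x /\ differentiable s x >] then (jac s x)%:E
  else 0%E.

(** Lebesgue integral of a nonnegative function on R^m, as the iterated
    one-dimensional Lebesgue integral (equal to the m-dimensional Lebesgue
    integral for measurable nonnegative integrands, by Tonelli). *)
Fixpoint iint (m : nat) : ('rV[R]_m -> \bar R) -> \bar R :=
  match m with
  | 0 => fun f => f 0
  | m'.+1 => fun f =>
      (\int[@lebesgue_measure R]_(t in [set: R])
          iint (fun y : 'rV[R]_m' => f (row_mx (t%:M : 'rV[R]_1) y)))%E
  end.

Definition area m (s : smap m) : \bar R := iint (jac_integrand s).

Definition mass m (c : smap m -> int) : \bar R :=
  (\sum_(s \in supp c) ((`|c s|%:~R : R)%:E * area s))%E.

Definition FV m (T : smap m -> int) : \bar R :=
  ereal_inf [set mass V | V in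
     [set V : smap m.+1 -> int | lipchain V /\ bd V = T]].

Definition pseudo_orientation m (A : smap m.+1 -> 'Z_2) (P : smap m.+1 -> int)
  : Prop := lipchain P /\ bd P = (fun _ => 0) /\ mod2 P = A.

Definition NOA m (A : smap m.+1 -> 'Z_2) : \bar R :=
  ereal_inf [set mass P | P in [set P | pseudo_orientation A P]].

End LipChains.

From HB Require Import structures.
From mathcomp Require Import all_boot all_order all_algebra.
From mathcomp Require Import all_classical all_reals all_analysis.
From mathcomp Require Import finmap.
Import Order.TTheory GRing.Theory Num.Theory.
Local Open Scope classical_set_scope.
Local Open Scope ring_scope.

Set Implicit Arguments.

(* Reducing [bd U = 2 T] mod 2 shows that [U mod 2] is a cycle. If [P] is any
   pseudo-orientation of [U mod 2], then [U - P] has even coefficients, and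
   [W := (U - P) / 2] satisfies [bd W = (bd U - bd P) / 2 = T] and, by the
   triangle inequality on coefficients, [mass W <= (mass U + mass P) / 2].
   Taking the infimum over [P] gives the bound on [FV T]. *)

Section LipChainAlgebra.
Variables (R : realType) (N : nat).

Lemma supp_subU (K : zmodType) m (c1 c2 : smap R N m -> K) :
  supp (fun s => c1 s - c2 s) `<=` supp c1 `|` supp c2.
Proof.
move=> s /= c12; have [c1s|] := eqVneq (c1 s) 0; last by left.
by right; apply: contraNneq c12 => c2s; rewrite c1s c2s subrr.
Qed.

Definition bd_term {K : pzRingType} {m} (c : smap R N m.+1 -> K) t s : K :=
  \sum_(i < m.+2) (((-1) ^+ i * c s) *+ (face s i == t)).

Lemma bd_fsum (K : pzRingType) m (c : smap R N m.+1 -> K) A t :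
  finite_set A -> supp c `<=` A ->
  bd c t = \sum_(s <- fset_set A) bd_term c t s.
Proof.
move=> finA cA; rewrite /bd (fsbig_widen (supp c) A) //; first exact: fsbig_finite.
move=> s [_ /negP]; rewrite negbK => /eqP /= cs0.
by apply: big1 => i _; rewrite cs0 mulr0 mul0rn.
Qed.

Lemma bdB (K : pzRingType) m (c1 c2 : smap R N m.+1 -> K) t :
  finite_set (supp c1) -> finite_set (supp c2) ->
  bd (fun s => c1 s - c2 s) t = bd c1 t - bd c2 t.
Proof.
move=> fin1 fin2; have finA : finite_set (supp c1 `|` supp c2) by rewrite finite_setU.
rewrite !(bd_fsum (A := supp c1 `|` supp c2)) //; last exact: supp_subU.
rewrite -sumrB; apply: eq_bigr => s _; rewrite -sumrB; apply: eq_bigr => i _.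
by rewrite -mulrnBl mulrBr.
Qed.

Lemma bdMr (K : pzRingType) m (c : smap R N m.+1 -> K) (a : K) t :
  finite_set (supp c) -> bd (fun s => c s * a) t = bd c t * a.
Proof.
move=> finc; have suppM : supp (fun s => c s * a) `<=` supp c.
  by move=> s /=; apply: contra => /eqP ->; rewrite mul0r.
rewrite !(bd_fsum (A := supp c)) // mulr_suml; apply: eq_bigr => s _.
by rewrite mulr_suml; apply: eq_bigr => i _; rewrite mulrnAl mulrA.
Qed.

Lemma bd_rmorph (K L : pzRingType) (f : {rmorphism K -> L}) m
    (c : smap R N m.+1 -> K) t :
  finite_set (supp c) -> bd (f \o c) t = f (bd c t).
Proof.
move=> finc; have suppf : supp (f \o c) `<=` supp c.
  by move=> s; apply: contra => /eqP cs0; rewrite /= cs0 rmorph0.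
rewrite !(bd_fsum (A := supp c)) // rmorph_sum; apply: eq_bigr => s _.
rewrite rmorph_sum; apply: eq_bigr => i _.
by rewrite rmorphMn rmorphM rmorphXn rmorphN1.
Qed.

Lemma iint_ge0 m (f : 'rV[R]_m -> \bar R) :
  (forall x, (0 <= f x)%E) -> (0 <= iint f)%E.
Proof.
elim: m f => [|m IH] f f0 /=; first exact: f0.
by apply: integral_ge0 => t _; apply: IH.
Qed.

Lemma area_ge0 m (s : smap R N m) : (0 <= area s)%E.
Proof.
apply: iint_ge0 => x; rewrite /jac_integrand.
by case: ifP => // _; rewrite lee_fin sqrtr_ge0.
Qed.

Lemma mass_fsum m (c : smap R N m -> int) A :
  finite_set A -> supp c `<=` A ->
  mass c = (\sum_(s <- fset_set A) ((`|c s|%:~R : R)%:E * area s))%E.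
Proof.
move=> finA cA; rewrite /mass (fsbig_widen (supp c) A) //; first exact: fsbig_finite.
by move=> s [_ /negP]; rewrite negbK => /eqP /= ->; rewrite mul0e.
Qed.

Lemma mass_ge0 m (c : smap R N m -> int) : (0 <= mass c)%E.
Proof.
by apply: fsume_ge0 => s _; rewrite mule_ge0 ?area_ge0 // lee_fin ler0z.
Qed.

Lemma massMz m (c : smap R N m -> int) (k : int) :
  finite_set (supp c) -> mass (fun s => c s * k) = (mass c * (`|k|%:~R)%:E)%E.
Proof.
move=> finc; have suppM : supp (fun s => c s * k) `<=` supp c.
  by move=> s /=; apply: contra => /eqP ->; rewrite mul0r.
rewrite !(mass_fsum (A := supp c)) // ge0_sume_distrl; last first.
  by move=> s _; rewrite mule_ge0 ?area_ge0 // lee_fin ler0z.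
apply: eq_bigr => s _.
by rewrite muleAC -EFinM normrM intrM.
Qed.

Lemma massB_le m (c1 c2 : smap R N m -> int) :
  finite_set (supp c1) -> finite_set (supp c2) ->
  (mass (fun s => (c1 s - c2 s)%R) <= mass c1 + mass c2)%E.
Proof.
move=> fin1 fin2; have finA : finite_set (supp c1 `|` supp c2) by rewrite finite_setU.
rewrite !(mass_fsum (A := supp c1 `|` supp c2)) //; last exact: supp_subU.
rewrite -big_split /=; apply: lee_sum => s _.
rewrite -ge0_muleDl ?lee_fin ?ler0z // lee_wpmul2r ?area_ge0 //.
by rewrite -EFinD lee_fin -intrD ler_int ler_normB.
Qed.

End LipChainAlgebra.

Lemma intr_Z2_eq0 (z : int) : ((z%:~R : 'Z_2) == 0) = (2 %| z)%Z.
Proof.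
have two0 : (2%:~R : 'Z_2) = 0 by rewrite -pmulrn; exact: pchar_Zp.
rewrite {1}(divz_eq z 2) intrD intrM two0 mulr0 add0r -(sameP eqP dvdz_mod0P).
by case: (z %% 2)%Z (modz_ge0 z (isT : 2%:Z != 0)) (ltz_pmod z (isT : 0 < 2%:Z))
  => [[|[|k]]|k].
Qed.

Lemma lee_ereal_inf_addMr (R : realType) (S : set \bar R) (a b : \bar R) (r : R) :
  (0 < r)%R -> (0 <= b)%E -> (forall y, S y -> 0 <= y)%E ->
  (forall y, S y -> a <= (b + y) * (r^-1)%:E)%E ->
  (a <= (b + ereal_inf S) * (r^-1)%:E)%E.
Proof.
move=> r0 b0 S0 aS; rewrite lee_pdivlMr //.
case: b b0 aS => [b| |] // _ aS.
  rewrite -leeBlDl //; apply/ereal_infP => y Sy.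
  by rewrite leeBlDl // -lee_pdivlMr //; exact: aS.
have inf0 : (0 <= ereal_inf S)%E by apply/ereal_infP.
by rewrite addye ?leey // gt_eqF // (lt_le_trans _ inf0) ?ltNy0.
Qed.

Section EvenBoundary.
Variables (R : realType) (N n : nat) (T : smap R N n -> int) (U : smap R N n.+1 -> int).
Hypotheses (lipU : lipchain U) (bdU : bd U = (fun t => 2 * T t)).

Lemma mod2_even_bd_cycle : bd (mod2 U) = (fun _ => 0).
Proof.
apply: funext => t; have bdUt : bd U t = 2 * T t by rewrite bdU.
change (bd ((intr : int -> 'Z_2) \o U) t = 0).
rewrite bd_rmorph; last exact: lipU.1.
by rewrite bdUt; apply/eqP; rewrite /= intr_Z2_eq0 dvdz_mulr.
Qed.

Lemma FV_le_mass_pseudo_orientation P :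
  pseudo_orientation (mod2 U) P -> (FV T <= (mass U + mass P) * (2^-1)%:E)%E.
Proof.
move=> [lipP [bdP modP]].
have two_dvd s : (2 %| U s - P s)%Z.
  by rewrite -intr_Z2_eq0 intrB -[(P s)%:~R]/(mod2 P s) modP subrr.
pose W s := ((U s - P s) %/ 2)%Z.
have WE : (fun s => W s * 2) = (fun s => U s - P s).
  by apply: funext => s; exact: divzK.
have suppW : supp W `<=` supp U `|` supp P.
  move=> s Ws; apply: supp_subU; apply: contra Ws => /eqP UPs0.
  by rewrite /W UPs0 div0z.
have finW : finite_set (supp W).
  apply: sub_finite_set suppW _.
  by rewrite finite_setU; split; [exact: lipU.1|exact: lipP.1].
have bdW : bd W = T.
  apply: funext => t; apply: (mulIf (isT : 2%:Z != 0)).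
  have [bdUt bdPt] : bd U t = 2 * T t /\ bd P t = 0 by rewrite bdU bdP.
  rewrite -bdMr // WE bdB; [|exact: lipU.1|exact: lipP.1].
  by rewrite bdUt bdPt subr0 mulrC.
have lipW : lipchain W.
  by split=> // s /suppW [Us|Ps]; [exact: lipU.2|exact: lipP.2].
apply: (@le_trans _ _ (mass W)); first by apply: ereal_inf_lbound; exists W.
rewrite lee_pdivlMr // (_ : 2%R = `|2%:Z|%:~R) // -massMz // WE.
by apply: massB_le; [exact: lipU.1|exact: lipP.1].
Qed.

End EvenBoundary.

Theorem lemma1p2 (R : realType) (N n : nat)
  (T : smap R N n -> int) (U : smap R N n.+1 -> int) :
  lipchain T -> lipchain U ->
  bd U = (fun t => 2 * T t) ->
  bd (mod2 U) = (fun _ => 0) /\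
  (FV T <= (mass U + NOA (mod2 U)) * (2^-1)%:E)%E.
Proof.
move=> _ lipU bdU; split; first exact: mod2_even_bd_cycle bdU.
apply: lee_ereal_inf_addMr; [by []|exact: mass_ge0| |].
  by move=> _ [P _ <-]; exact: mass_ge0.
by move=> _ [P PU <-]; exact: FV_le_mass_pseudo_orientation PU.
Qed.
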